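(* Let $\kappa$ be an uncountable cardinal and $X$, $Y$ Banach spaces. If $X$ and $Y$ are both $\mathrm{ASQ}_{<\kappa}$, then the projective tensor product $X\widehat{\otimes}_\pi Y$ is $\mathrm{ASQ}_{<\kappa}$. If $X$ and $Y$ are both $\mathrm{SQ}_{<\kappa}$, then $X\widehat{\otimes}_\pi Y$ is $\mathrm{SQ}_{<\kappa}$.
   Context: $X\widehat{\otimes}_\pi Y$ is the completion of $X\otimes Y$ under the norm $\|u\|=\inf\{\sum_i\|x_i\|\|y_i\|: u=\sum_i x_i\otimes y_i\}$. A Banach space $Z$ is $\mathrm{ASQ}_{<\kappa}$ if for every set $A\subset S_Z$ with $|A|<\kappa$ and every $\varepsilon>0$ there exists $y\in S_Z$ with $\|x\pm y\|\le 1+\varepsilon$ for all $x\in A$; $Z$ is $\mathrm{SQ}_{<\kappa}$ if for every such $A$ there exists $y\in S_Z$ with $\|x\pm y\|\le 1$ for all $x\in A$. *)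

From HB Require Import structures.
From mathcomp Require Import all_boot all_order all_algebra.
From mathcomp Require Import all_classical all_reals all_analysis.
Set Implicit Arguments. Unset Strict Implicit. Unset Printing Implicit Defensive.
Import Order.TTheory GRing.Theory Num.Theory.
Import numFieldNormedType.Exports.
Local Open Scope classical_set_scope.
Local Open Scope ring_scope.

(* A cardinal kappa is represented by a type K (kappa = |K|).
   |A| < kappa  :=  A injects into K but K does not inject into A. *)
Definition card_lt_type (T K : Type) (A : set T) : Prop :=
  (A #<= [set: K])%card /\ ~ ([set: K] #<= A)%card.

Definition uncountable_card (K : Type) : Prop := ~ countable [set: K].

Definition ASQ_lt (R : realType) (K : Type) (Z : normedModType R) : Prop :=
  forall (A : set Z), A `<=` [set x | `|x| = 1] -> card_lt_type K A ->
  forall eps : R, 0 < eps ->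
  exists y : Z, `|y| = 1 /\
    (forall x, A x -> `|x + y| <= 1 + eps /\ `|x - y| <= 1 + eps).

Definition SQ_lt (R : realType) (K : Type) (Z : normedModType R) : Prop :=
  forall (A : set Z), A `<=` [set x | `|x| = 1] -> card_lt_type K A ->
  exists y : Z, `|y| = 1 /\
    (forall x, A x -> `|x + y| <= 1 /\ `|x - y| <= 1).

(* Finite tensors are represented by finite sequences of pairs
   s = [(x_1,y_1); ...; (x_n,y_n)] standing for sum_i x_i (x) y_i. *)
Definition tsum (R : realType) (X Y Z : normedModType R) (t : X -> Y -> Z)
  (s : seq (X * Y)) : Z := \sum_(p <- s) t p.1 p.2.

Definition pcost (R : realType) (X Y : normedModType R) (s : seq (X * Y)) : R :=
  \sum_(p <- s) (`|p.1| * `|p.2|).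

(* (Z, t) is the projective tensor product X (^)_pi Y, i.e. the completion of
   the algebraic tensor product X (x) Y (realised as span t(X,Y) in Z) under
   the projective norm:
   - t is bilinear;
   - the induced map X (x) Y -> Z is injective: a formal sum mapped to 0 is
     annihilated by every bilinear form, i.e. is the zero tensor;
   - on span t(X,Y) the norm of Z is the projective norm
       ||u|| = inf { sum ||x_i|| ||y_i|| : u = sum x_i (x) y_i };
   - span t(X,Y) is dense in Z (Z is complete by its type). *)
Record proj_tensor (R : realType) (X Y : normedModType R)
    (Z : completeNormedModType R) (t : X -> Y -> Z) : Prop := {
  pt_linl : forall y, linear (fun x => t x y);
  pt_linr : forall x, linear (t x);
  pt_inj : forall s : seq (X * Y), tsum t s = 0 ->
    forall B : X -> Y -> R, (forall y, linear (fun x => B x y)) ->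
      (forall x, linear (B x)) -> \sum_(p <- s) B p.1 p.2 = 0;
  pt_norm_lb : forall s s' : seq (X * Y), tsum t s' = tsum t s ->
    `|tsum t s| <= pcost s';
  pt_norm_approx : forall (s : seq (X * Y)) (e : R), 0 < e ->
    exists s' : seq (X * Y), tsum t s' = tsum t s /\ pcost s' <= `|tsum t s| + e;
  pt_dense : forall (z : Z) (e : R), 0 < e ->
    exists s : seq (X * Y), `|z - tsum t s| < e
}.

From HB Require Import structures.
From mathcomp Require Import all_boot all_order all_algebra.
From mathcomp Require Import all_classical all_reals all_analysis.
From mathcomp Require Import lra.
Set Implicit Arguments. Unset Strict Implicit. Unset Printing Implicit Defensive.
Import Order.TTheory GRing.Theory Num.Theory.
Import numFieldNormedType.Exports.
Local Open Scope classical_set_scope.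
Local Open Scope ring_scope.

(* Let A be a set of fewer than kappa unit tensors.  Each z in A is the
   limit of finite tensors sum_i x_i (x) y_i whose projective cost
   sum_i |x_i| |y_i| tends to |z| = 1.  Collecting the normalized x_i / |x_i|
   (resp. y_i / |y_i|) over all z in A and all approximations gives a set of
   cardinality at most |A x N| < kappa (here kappa uncountable is used), so the
   hypothesis on X (resp. Y) provides a unit vector x0 (resp. y0) that is
   alpha-close to plus and minus each of them.  The polarization identity
     2 (u (x) v + x0 (x) y0) = (u + x0) (x) (v + y0) + (u - x0) (x) (v - y0)
   bounds each |u (x) v + x0 (x) y0| by alpha^2, hence |z + x0 (x) y0| <= alpha^2
   in the limit, and likewise with -x0.  Finally |x0 (x) y0| = 1 because the
   projective norm is a cross norm, which is where Hahn-Banach enters. *)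

Section Cardinality.
Local Open Scope card_scope.

Lemma maximal_disjoint_sequences_cofinite (T : pointedType) (A : set T)
    (E : set (nat -> T)) :
  maximal_disjoint_subcollection (fun h => range h) E
    [set h | injective h /\ range h `<=` A] ->
  finite_set (A `\` \bigcup_(h in E) range h).
Proof.
move=> [ED trivE maxE]; set U := \bigcup_(h in E) range h.
apply: contrapT => /infiniteP /pcard_leP /injfunPex [h hAU hinj].
have hnotU n : ~ U (h n) by have [] := hAU n I.
apply: (maxE (h |` E)).
- split; first by move=> f Ef; right.
  move=> /(_ h (or_introl erefl)) Eh; apply: (hnotU 0%N).
  by exists h => //; exists 0%N.
- move=> f [->|/ED //]; split; first by move=> m k; apply: hinj; rewrite inE.
  by move=> _ [n _ <-]; have [] := hAU n I.
- move=> f g [->|Ef] [->|Eg] // [_ [[m _ <-] [k _ hk]]].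
  + by case: (hnotU m); rewrite -hk; exists g => //; exists k.
  + by case: (hnotU k); rewrite hk; exists f => //; exists m.
  + by apply: trivE => //; exists (f m); split; [exists m|exists k].
Qed.

(* Up to a finite set, A is the disjoint union of the ranges of a family E of
   injective sequences, so each a in A has a code (h, m) with h in E; then
   (a, n) is sent to h (pickle (m, n)). *)
Lemma card_setX_nat_le T (A : set T) : infinite_set A -> A `*` [set: nat] #<= A.
Proof.
elim/Ppointed: T => T in A *; first by rewrite emptyE.
move=> Ainf.
have [E Emax] := ex_maximal_disjoint_subcollection (fun h : nat -> T => range h)
  [set h | injective h /\ range h `<=` A].
have finAU := maximal_disjoint_sequences_cofinite Emax.
have /countable_injP [e einj] := finite_set_countable finAU.
case: Emax => ED trivE _; set U := \bigcup_(h in E) range h in finAU einj.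
have [h0 Eh0] : E !=set0.
  apply/set0P/negP => /eqP E0; apply: Ainf.
  by move: finAU; rewrite /U E0 bigcup_set0 setD0.
have [pos posP] : {pos : T -> (nat -> T) * nat &
    forall a, U a -> E (pos a).1 /\ (pos a).1 (pos a).2 = a}.
  apply: (@choice _ _ (fun a p => U a -> E p.1 /\ p.1 p.2 = a)) => a.
  have [[h Eh [k _ hk]]|nUa] := pselect (U a); last by exists (h0, 0%N).
  by exists (h, k).
pose code a : (nat -> T) * (nat + nat) :=
  if `[< U a >] then ((pos a).1, inl (pos a).2) else (h0, inr (e a)).
have codeE a : E (code a).1.
  by rewrite /code; case: ifPn => [/asboolP /posP []|].
have code_inj : {in A &, injective code}.
  move=> a a' /set_mem Aa /set_mem Aa'; rewrite /code.
  case: ifPn => [/asboolP Ua|/asboolP nUa]; case: ifPn => [/asboolP Ua'|/asboolP nUa'] //.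
  - move=> [e1 e2]; have [_ <-] := posP _ Ua; have [_ <-] := posP _ Ua'.
    by rewrite e1 e2.
  - by move=> [ea]; apply: (einj _ _ _ _ ea); rewrite inE.
pose g (an : T * nat) := (code an.1).1 (pickle ((code an.1).2, an.2)).
apply/pcard_leP/injfunPex; exists g.
  by move=> [a n] _; apply: (proj2 (ED _ (codeE a))); exact: imageT.
move=> [a n] [a' n'] /set_mem [/= Aa _] /set_mem [/= Aa' _] eq_g.
have eq1 : (code a).1 = (code a').1.
  by apply: trivE => //; exists (g (a, n)); split; [eexists|rewrite eq_g; eexists].
move: eq_g; rewrite /g /= eq1 => /(proj1 (ED _ (codeE a'))) /(pcan_inj pickleK).
case=> eq2 ->; rewrite (code_inj a a') ?inE //.
by rewrite [code a]surjective_pairing eq1 eq2 -surjective_pairing.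
Qed.

Lemma card_lt_type_le K T U (A : set T) (C : set U) :
  card_lt_type K A -> C #<= A -> card_lt_type K C.
Proof.
move=> [AK KnA] CA; split; first exact: card_le_trans CA AK.
by move=> KC; apply: KnA; exact: card_le_trans KC CA.
Qed.

Lemma card_lt_type_setX_nat K T (A : set T) : uncountable_card K ->
  card_lt_type K A -> card_lt_type K (A `*` [set: nat]).
Proof.
move=> Kunc AK; have [Afin|Ainf] := pselect (finite_set A).
  have ANc : countable (A `*` [set: nat]).
    by apply: countableX; [exact: finite_set_countable|exact: card_lexx].
  split; last by move=> /card_le_trans /(_ ANc).
  apply: card_le_trans ANc _; apply/infiniteP => Kfin.
  by apply: Kunc; exact: finite_set_countable.
exact: card_lt_type_le AK (card_setX_nat_le Ainf).
Qed.

End Cardinality.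

Section HahnBanach.
Variables (R : realType) (X : normedModType R).
Implicit Types (G : set (X * R)) (x y z d : X) (a b c : R).

Definition dominated_linear_graph G :=
  [/\ forall x a b, G (x, a) -> G (x, b) -> a = b,
      forall c x a y b, G (x, a) -> G (y, b) -> G (c *: x + y, c * a + b) &
      forall x a, G (x, a) -> a <= `|x|].

Lemma dominated_linear_graph_bigcup (F : set (set (X * R))) :
  F `<=` dominated_linear_graph -> total_on F subset ->
  dominated_linear_graph (\bigcup_(G in F) G).
Proof.
move=> Fdom Ftot; split.
- move=> x a b [G FG Ga] [G' FG' G'b].
  have [GG'|G'G] := Ftot _ _ FG FG'.
    by have [fun_G' _ _] := Fdom _ FG'; exact: fun_G' (GG' _ Ga) G'b.
  by have [fun_G _ _] := Fdom _ FG; exact: fun_G Ga (G'G _ G'b).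
- move=> c x a y b [G FG Ga] [G' FG' G'b].
  have [GG'|G'G] := Ftot _ _ FG FG'.
    by have [_ lin_G' _] := Fdom _ FG'; exists G' => //; exact: lin_G' (GG' _ Ga) G'b.
  by have [_ lin_G _] := Fdom _ FG; exists G => //; exact: lin_G Ga (G'G _ G'b).
- by move=> x a [G FG Ga]; have [_ _ dom_G] := Fdom _ FG; exact: dom_G Ga.
Qed.

Lemma dominated_linear_graph_scale G c x a :
  dominated_linear_graph G -> G (0, 0) -> G (x, a) -> G (c *: x, c * a).
Proof. by move=> [_ lin_G _] G00 Gx; have := lin_G c _ _ _ _ Gx G00; rewrite !addr0. Qed.

Section Extension.
Variables (G : set (X * R)) (z : X) (c : R).
Hypotheses (Gdom : dominated_linear_graph G) (G00 : G (0, 0)).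
Hypothesis Gz : forall a, ~ G (z, a).
Hypothesis c_sandwich :
  forall d a d' a', G (d, a) -> G (d', a') -> a - `|d - z| <= c <= `|d' + z| - a'.

Definition graph_extension : set (X * R) :=
  [set p | exists d a s, G (d, a) /\ p = (d + s *: z, a + s * c)].

Lemma graph_extension_functional x a b :
  graph_extension (x, a) -> graph_extension (x, b) -> a = b.
Proof.
have [fun_G lin_G _] := Gdom.
move=> [d [a1 [s [Gd [-> ->]]]]] [d' [a2 [s' [Gd' [e ->]]]]].
have [ss'|ss'] := eqVneq s s'.
  by move: e; rewrite -ss' => /addIr dd'; rewrite dd' in Gd; rewrite (fun_G _ _ _ Gd Gd').
suff /Gz [] : G (z, (s - s')^-1 * (- a1 + a2)).
have dz : - d + d' = (s - s') *: z.
  by apply: (addIr (s' *: z)); rewrite -addrA -e addKr scalerBl subrK.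
have -> : z = (s - s')^-1 *: (- d + d').
  by rewrite dz scalerA mulVf ?scale1r // subr_eq0.
apply: dominated_linear_graph_scale => //.
by have := lin_G (-1) _ _ _ _ Gd Gd'; rewrite scaleN1r mulN1r.
Qed.

Lemma graph_extension_linear k x a y b :
  graph_extension (x, a) -> graph_extension (y, b) ->
  graph_extension (k *: x + y, k * a + b).
Proof.
have [_ lin_G _] := Gdom.
move=> [d [a1 [s [Gd [-> ->]]]]] [d' [a2 [s' [Gd' [-> ->]]]]].
exists (k *: d + d'), (k * a1 + a2), (k * s + s'); split; first exact: lin_G.
congr pair; first by rewrite scalerDr scalerA scalerDl addrACA.
by rewrite mulrDr mulrA mulrDl addrACA.
Qed.

Lemma graph_extension_dominated x a : graph_extension (x, a) -> a <= `|x|.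
Proof.
have [_ _ dom_G] := Gdom.
move=> [d [a1 [s [Gd [-> ->]]]]].
have unscale u w : 0 < u -> u * `|u^-1 *: d + w| = `|d + u *: w|.
  move=> u_gt0; rewrite -{1}[u]gtr0_norm // -normrZ scalerDr scalerA.
  by rewrite mulfV ?gt_eqF // scale1r.
have [s_gt0|s_le0] := ltP 0 s.
  have /andP[_ /(ler_wpM2l (ltW s_gt0))] :=
    c_sandwich G00 (dominated_linear_graph_scale s^-1 Gdom G00 Gd).
  by rewrite mulrBr unscale // mulrA mulfV ?gt_eqF // mul1r; lra.
have [->|s_neq0] := eqVneq s 0; first by rewrite scale0r mul0r !addr0; exact: dom_G.
have ns_gt0 : 0 < - s by rewrite oppr_gt0 lt_neqAle s_neq0.
have /andP[/(ler_wpM2l (ltW ns_gt0)) + _] :=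
  c_sandwich (dominated_linear_graph_scale (- s)^-1 Gdom G00 Gd) G00.
by rewrite mulrBr unscale // scaleNr scalerN opprK mulrA mulfV ?gt_eqF // mul1r; lra.
Qed.

Lemma dominated_linear_graph_extension :
  dominated_linear_graph graph_extension.
Proof.
split; [exact: graph_extension_functional | exact: graph_extension_linear |].
exact: graph_extension_dominated.
Qed.

End Extension.

Lemma dominated_linear_graph_sandwich G z :
  dominated_linear_graph G -> G (0, 0) -> exists c,
    forall d a d' a', G (d, a) -> G (d', a') -> a - `|d - z| <= c <= `|d' + z| - a'.
Proof.
move=> [_ lin_G dom_G] G00.
have lower_le_upper d a d' a' : G (d, a) -> G (d', a') -> a - `|d - z| <= `|d' + z| - a'.
  move=> Gd Gd'; have := dom_G _ _ (lin_G 1 _ _ _ _ Gd Gd').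
  rewrite scale1r mul1r.
  by have := ler_normD (d - z) (d' + z); rewrite addrACA addNr addr0; lra.
pose lower := [set r | exists d a, G (d, a) /\ r = a - `|d - z|].
have lower_ub d' a' : G (d', a') -> ubound lower (`|d' + z| - a').
  by move=> Gd' _ [d [a [Gd ->]]]; exact: lower_le_upper.
have lower0 : lower (0 - `|0 - z|) by exists 0, 0.
exists (sup lower) => d a d' a' Gd Gd'; apply/andP; split.
  by apply: ub_le_sup; [exists (`|0 + z| - 0); exact: lower_ub | exists d, a].
by apply: ge_sup; [exists (0 - `|0 - z|) | exact: lower_ub].
Qed.

Lemma dominated_linear_graph_line x0 :
  dominated_linear_graph [set (s *: x0, s * `|x0|) | s in [set: R]].
Proof.
split.
- move=> x a b [s _ [<- <-]] [s' _ [/eqP]].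
  rewrite -subr_eq0 -scalerBl scaler_eq0 subr_eq0 => /orP[/eqP-> //|/eqP->].
  by rewrite normr0 !mulr0.
- move=> k x a y b [s _ [<- <-]] [s' _ [<- <-]]; exists (k * s + s') => //.
  by rewrite scalerDl scalerA mulrDl mulrA.
- by move=> x a [s _ [<- <-]]; rewrite normrZ ler_wpM2r // ler_norm.
Qed.

Lemma hahn_banach_norming x0 :
  exists f : X -> R, [/\ linear f, f x0 = `|x0| & forall x, `|f x| <= `|x|].
Proof.
(* Asking only nonempty graphs to contain (x0, |x0|) makes the empty chain admissible. *)
pose P G := dominated_linear_graph G /\ (G !=set0 -> G (x0, `|x0|)).
have [G [[Gdom Gx0] Gmax]] : exists G, P G /\ forall G', G `<` G' -> ~ P G'.
  apply: Zorn_bigcup => F FP Ftot; split.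
    exact: dominated_linear_graph_bigcup (fun G FG => (FP G FG).1) Ftot.
  by move=> [p [G FG Gp]]; exists G => //; apply: (FP G FG).2; exists p.
have [fun_G lin_G dom_G] := Gdom.
pose line := [set (s *: x0, s * `|x0|) | s in [set: R]].
have line_x0 : line (x0, `|x0|) by exists 1; rewrite ?scale1r ?mul1r.
have {}Gx0 : G (x0, `|x0|).
  apply: contrapT => nGx0; apply: (Gmax line); last first.
    by split; [exact: dominated_linear_graph_line | move=> _].
  split=> [p Gp|/(_ _ line_x0)//]; exfalso; apply: nGx0.
  by apply: Gx0; exists p.
have G00 : G (0, 0).
  by have := lin_G (-1) _ _ _ _ Gx0 Gx0; rewrite scaleN1r mulN1r !addNr.
have [f Gf] : {f : X -> R & forall x, G (x, f x)}.
  apply: (@choice _ _ (fun x a => G (x, a))) => z; apply: contrapT => nGz.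
  have {}nGz a : ~ G (z, a) by move=> Gza; apply: nGz; exists a.
  have [c c_sandwich] := dominated_linear_graph_sandwich z Gdom G00.
  have GGext : G `<=` graph_extension G z c.
    by move=> [d a] Gd; exists d, a, 0; rewrite scale0r mul0r !addr0.
  apply: (Gmax (graph_extension G z c)).
    split=> // /(_ (z, c)) Gz; apply: (nGz c); apply: Gz.
    by exists 0, 0, 1; rewrite scale1r mul1r !add0r.
  split=> [|_]; last exact: GGext.
  exact: dominated_linear_graph_extension.
have f_linear : linear f.
  by move=> k x y; exact: fun_G (Gf _) (lin_G k _ _ _ _ (Gf x) (Gf y)).
exists f; split => // [|x]; first exact: fun_G (Gf _) Gx0.
rewrite ler_norml dom_G // andbT lerNl -(normrN x).
have := lin_G (-1) _ _ _ _ (Gf x) G00; rewrite scaleN1r mulN1r !addr0.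
by move=> /(fun_G _ _ _ (Gf (- x))) <-; exact: dom_G.
Qed.

End HahnBanach.

Definition normalize (R : numFieldType) (V : normedModType R) (x : V) := `|x|^-1 *: x.

Lemma norm_normalize (R : numFieldType) (V : normedModType R) (x : V) :
  x != 0 -> `|normalize x| = 1.
Proof. by move=> x0; rewrite normrZ normfV normr_id mulVf ?normr_eq0. Qed.

Definition pm_close (R : numFieldType) (V : normedModType R) (al : R) (y x : V) :=
  `|x + y| <= al /\ `|x - y| <= al.

Lemma pm_closeN (R : numFieldType) (V : normedModType R) (al : R) (y x : V) :
  pm_close al y x -> pm_close al (- y) x.
Proof. by move=> [? ?]; split; rewrite ?opprK. Qed.

Lemma linear_fun_oppr (R : pzRingType) (U V : lmodType R) (f : U -> V) :
  linear f -> forall x, f (- x) = - f x.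
Proof.
move=> /zmod_morphism_linear fB x.
have f0 : f 0 = 0 by rewrite -(subrr 0) fB subrr.
by rewrite -sub0r fB f0 sub0r.
Qed.

Lemma le_of_le_add_inv (R : realType) (a b C : R) :
  (forall n, a <= b + C * n.+1%:R^-1) -> a <= b.
Proof.
move=> le_ab; apply/ler_addgt0Pr => e e_gt0.
have [C_le0|C_gt0] := leP C 0.
  apply: le_trans (le_ab 0%N) _; rewrite lerD2l.
  by apply: le_trans (ltW e_gt0); rewrite mulr_le0_ge0.
have [n] := ltr_add_invr (divr_gt0 e_gt0 C_gt0); rewrite add0r => n_small.
apply: le_trans (le_ab n) _; rewrite lerD2l -ler_pdivlMl //.
by rewrite ltW // mulrC.
Qed.

Section ProjectiveTensor.
Variables (R : realType) (X Y : normedModType R) (Z : completeNormedModType R).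
Variables (t : X -> Y -> Z) (Ht : proj_tensor t).

HB.instance Definition _ :=
  bilinear_isBilinear.Build R X Y Z *:%R *:%R t (pt_linl Ht, pt_linr Ht).

Definition proj_approx (z : Z) (S : nat -> seq (X * Y)) := forall n,
  `|z - tsum t (S n)| <= n.+1%:R^-1 /\ pcost (S n) <= `|z| + n.+1%:R^-1.

Lemma tsum1 x y : tsum t [:: (x, y)] = t x y.
Proof. by rewrite /tsum big_seq1. Qed.

Lemma norm_tsum_le s : `|tsum t s| <= pcost s.
Proof. exact: pt_norm_lb. Qed.

Lemma bilinear_tsum_eq (B : X -> Y -> R) s s' :
  (forall y, linear (B^~ y)) -> (forall x, linear (B x)) ->
  tsum t s = tsum t s' -> \sum_(p <- s) B p.1 p.2 = \sum_(p <- s') B p.1 p.2.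
Proof.
move=> Bl Br ss'; apply/eqP; rewrite -subr_eq0; apply/eqP.
have /(pt_inj Ht) /(_ B Bl Br) : tsum t (s ++ [seq (- p.1, p.2) | p <- s']) = 0.
  rewrite /tsum big_cat big_map /=.
  under [X in _ + X]eq_bigr do rewrite linearNl.
  by rewrite sumrN -/(tsum t s) -/(tsum t s') ss' subrr.
rewrite big_cat big_map /=.
by under [X in _ + X]eq_bigr do rewrite (linear_fun_oppr (Bl _)); rewrite sumrN.
Qed.

Lemma norm_tensor x y : `|t x y| = `|x| * `|y|.
Proof.
apply/eqP; rewrite eq_le -{1}tsum1.
rewrite (le_trans (norm_tsum_le _)) ?/pcost ?big_seq1 //=.
have [f [f_lin fx f_le]] := hahn_banach_norming x.
have [g [g_lin gy g_le]] := hahn_banach_norming y.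
have Bl b : linear (fun a => f a * g b).
  by move=> k u v; rewrite f_lin mulrDl scalerAl.
have Br a : linear (fun b => f a * g b).
  by move=> k u v; rewrite g_lin mulrDr scalerAr.
have le_pcost s : tsum t s = t x y -> `|x| * `|y| <= pcost s.
  rewrite -tsum1 => /(bilinear_tsum_eq Bl Br); rewrite big_seq1 /= fx gy => <-.
  apply: ler_sum => p _; apply: le_trans (ler_norm _) _.
  by rewrite normrM ler_pM.
apply/ler_addgt0Pr => e e_gt0.
have [s [ts pcost_s]] := pt_norm_approx Ht [:: (x, y)] e_gt0.
by rewrite -tsum1; apply: le_trans pcost_s; apply: le_pcost; rewrite ts tsum1.
Qed.

Lemma norm_tensor_add_le al x y u v :
  pm_close al x u -> pm_close al y v -> `|t u v + t x y| <= al ^+ 2.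
Proof.
move=> [ux_le uNx_le] [vy_le vNy_le].
have polarization : t (u + x) (v + y) + t (u - x) (v - y) = (t u v + t x y) *+ 2.
  rewrite linearDl linearBl !linearBr !linearDr opprB addrACA.
  rewrite [t x v + _]addrC [t u v + _ + _]addrACA [t x y + _ + _]addrACA.
  by rewrite !subrr !addr0 mulr2n addrACA.
have := ler_normD (t (u + x) (v + y)) (t (u - x) (v - y)).
rewrite polarization normrMn !norm_tensor mulr2n.
have := ler_pM (normr_ge0 _) (normr_ge0 _) ux_le vy_le.
have := ler_pM (normr_ge0 _) (normr_ge0 _) uNx_le vNy_le.
rewrite expr2; lra.
Qed.

Lemma norm_tensor_add_scaled_le al x1 y1 x y : 0 <= al ->
  (x != 0 -> pm_close al x1 (normalize x)) ->
  (y != 0 -> pm_close al y1 (normalize y)) ->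
  `|t x y + (`|x| * `|y|) *: t x1 y1| <= `|x| * `|y| * al ^+ 2.
Proof.
move=> al_ge0 x_close y_close.
have [->|x0] := eqVneq x 0.
  by rewrite linear0l normr0 !mul0r scale0r addr0 normr0.
have [->|y0] := eqVneq y 0.
  by rewrite linear0r normr0 !mulr0 mul0r scale0r addr0 normr0.
have -> : t x y = (`|x| * `|y|) *: t (normalize x) (normalize y).
  rewrite /normalize linearZl_LR linearZr_LR !scalerA.
  by rewrite mulrAC mulfK ?normr_eq0 // divff ?normr_eq0 // scale1r.
rewrite -scalerDr normrZ ger0_norm ?mulr_ge0 // ler_wpM2l ?mulr_ge0 //.
exact: norm_tensor_add_le (x_close x0) (y_close y0).
Qed.

Lemma norm_tsum_add_pcost_le al x1 y1 s : 0 <= al ->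
  (forall p, p \in s -> p.1 != 0 -> pm_close al x1 (normalize p.1)) ->
  (forall p, p \in s -> p.2 != 0 -> pm_close al y1 (normalize p.2)) ->
  `|tsum t s + pcost s *: t x1 y1| <= pcost s * al ^+ 2.
Proof.
move=> al_ge0 s_fst s_snd.
rewrite /tsum /pcost scaler_suml -big_split /= mulr_suml.
apply: le_trans (ler_norm_sum _ _ _) _; rewrite big_seq [leRHS]big_seq.
apply: ler_sum => p ps; apply: norm_tensor_add_scaled_le => // ?.
  exact: s_fst.
exact: s_snd.
Qed.

Lemma norm_add_tensor_le_approx al x1 y1 z s d : 0 <= al -> `|t x1 y1| <= 1 ->
  `|z| = 1 -> `|z - tsum t s| <= d -> pcost s <= `|z| + d ->
  (forall p, p \in s -> p.1 != 0 -> pm_close al x1 (normalize p.1)) ->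
  (forall p, p \in s -> p.2 != 0 -> pm_close al y1 (normalize p.2)) ->
  `|z + t x1 y1| <= al ^+ 2 + (2 + al ^+ 2) * d.
Proof.
set T := tsum t s; set L := pcost s; set w := t x1 y1.
move=> al_ge0 w_le1 z1 approx_z pcost_le s_fst s_snd.
have sum_le : `|T + L *: w| <= L * al ^+ 2 :=
  norm_tsum_add_pcost_le al_ge0 s_fst s_snd.
have L_ge : 1 - d <= L.
  have := ler_normD (z - T) T; have := norm_tsum_le s.
  by rewrite subrK z1 -/T -/L; lra.
have tail_le : `|(1 - L) *: w| <= d.
  rewrite normrZ; apply: le_trans (ler_piMr _ w_le1) _ => //.
  by rewrite ler_norml; apply/andP; split; lra.
have L_al_le : L * al ^+ 2 <= (1 + d) * al ^+ 2.
  by rewrite ler_wpM2r ?exprn_ge0 // -z1.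
have -> : z + w = (z - T) + (T + L *: w) + (1 - L) *: w.
  by rewrite scalerBl scale1r [z - T + _]addrA subrK addrACA subrr addr0.
have := ler_normD (z - T + (T + L *: w)) ((1 - L) *: w).
have := ler_normD (z - T) (T + L *: w).
lra.
Qed.

Lemma pm_close_tensor_of_approx al x1 y1 z (S : nat -> seq (X * Y)) :
  0 <= al -> `|t x1 y1| <= 1 -> `|z| = 1 -> proj_approx z S ->
  (forall n p, p \in S n -> p.1 != 0 -> pm_close al x1 (normalize p.1)) ->
  (forall n p, p \in S n -> p.2 != 0 -> pm_close al y1 (normalize p.2)) ->
  pm_close (al ^+ 2) (t x1 y1) z.
Proof.
move=> al_ge0 w_le1 z1 S_approx S_fst S_snd.
have add_le x : `|t x y1| <= 1 -> (forall n p, p \in S n -> p.1 != 0 ->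
    pm_close al x (normalize p.1)) -> `|z + t x y1| <= al ^+ 2.
  move=> xw_le1 S_fst'; apply: le_of_le_add_inv => n; have [? ?] := S_approx n.
  exact: norm_add_tensor_le_approx (S_fst' n) (S_snd n).
split; first exact: add_le.
rewrite -linearNl; apply: add_le; first by rewrite linearNl normrN.
by move=> n p ps p1; exact: pm_closeN (S_fst n p ps p1).
Qed.

End ProjectiveTensor.

Definition seq_entries (T : Type) (W : eqType) (A : set T) (S : T -> nat -> seq W) :
  set W := [set w | exists z n, A z /\ w \in S z n].

Definition normalized_image (T : Type) (R : numFieldType) (V : normedModType R)
  (f : T -> V) (P : set T) : set V :=
  [set normalize (f p) | p in [set p | P p /\ f p != 0]].

Lemma normalized_image_sphere (T : Type) (R : numFieldType) (V : normedModType R)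
    (f : T -> V) (P : set T) :
  normalized_image f P `<=` [set x | `|x| = 1].
Proof. by move=> _ [p [_ fp0] <-]; exact: norm_normalize. Qed.
Arguments normalized_image_sphere {T R V f P}.

Lemma card_lt_type_normalized_entries K T (W : pointedType) (R : numFieldType)
    (V : normedModType R) (f : W -> V) (A : set T) (S : T -> nat -> seq W) :
  uncountable_card K -> card_lt_type K A ->
  card_lt_type K (normalized_image f (seq_entries A S)).
Proof.
move=> Kunc AK; apply: card_lt_type_le (card_lt_type_setX_nat Kunc AK) _.
apply: card_le_trans (card_image_le _ _) _.
pose entry (zk : T * nat) :=
  if unpickle zk.2 is Some (n, i) then nth point (S zk.1 n) i else point.
apply: card_le_trans (subset_card_le _) (card_image_le entry _).
move=> w [[z [n [Az ws]]] _]; exists (z, pickle (n, index w (S z n))) => //.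
by rewrite /entry /= pickleK nth_index.
Qed.

Section Main.
Variables (R : realType) (X Y : normedModType R) (Z : completeNormedModType R).
Variables (t : X -> Y -> Z) (Ht : proj_tensor t).

Lemma exists_proj_approx :
  exists S : Z -> nat -> seq (X * Y), forall z, proj_approx t z (S z).
Proof.
have approx (zn : Z * nat) : exists s : seq (X * Y),
    `|zn.1 - tsum t s| <= zn.2.+1%:R^-1 /\ pcost s <= `|zn.1| + zn.2.+1%:R^-1.
  case: zn => z n /=; set d := n.+1%:R^-1.
  have d2_gt0 : 0 < d / 2 by rewrite divr_gt0 // invr_gt0 ltr0n.
  have [s zs_lt] := pt_dense Ht z d2_gt0.
  have [s' [ts' pcost_s']] := pt_norm_approx Ht s d2_gt0.
  exists s'; rewrite ts'; split; first lra.
  by have := ler_normD (tsum t s - z) z; rewrite subrK distrC; lra.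
have [S HS] := choice approx.
by exists (fun z n => S (z, n)) => z n; exact: HS (z, n).
Qed.

Lemma pm_close_tensor_entries (A : set Z) (S : Z -> nat -> seq (X * Y)) al x0 y0 :
  (forall z, proj_approx t z (S z)) -> 0 <= al -> `|t x0 y0| <= 1 ->
  A `<=` [set z | `|z| = 1] ->
  (forall u, normalized_image fst (seq_entries A S) u -> pm_close al x0 u) ->
  (forall v, normalized_image snd (seq_entries A S) v -> pm_close al y0 v) ->
  forall z, A z -> pm_close (al ^+ 2) (t x0 y0) z.
Proof.
move=> S_approx al_ge0 w_le1 A1 X_close Y_close z Az.
apply: (pm_close_tensor_of_approx Ht al_ge0 w_le1 (A1 _ Az) (S_approx z)).
  by move=> n p ps p0; apply: X_close; exists p => //; split => //; exists z, n.
by move=> n p ps p0; apply: Y_close; exists p => //; split => //; exists z, n.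
Qed.

End Main.

Theorem theorem4p4 (R : realType) (K : Type) (X Y Z : completeNormedModType R)
    (t : X -> Y -> Z) :
  uncountable_card K -> proj_tensor t ->
  (ASQ_lt K X -> ASQ_lt K Y -> ASQ_lt K Z) /\
  (SQ_lt K X -> SQ_lt K Y -> SQ_lt K Z).
Proof.
move=> Kunc Ht; have [S S_approx] := exists_proj_approx Ht.
have unit_tensor x y : `|x| = 1 -> `|y| = 1 -> `|t x y| = 1.
  by move=> x1 y1; rewrite (norm_tensor Ht) x1 y1 mulr1.
split=> [XASQ YASQ A A1 AK eps eps_gt0 | XSQ YSQ A A1 AK].
- have al_gt1 : 1 < Num.sqrt (1 + eps) by rewrite -{1}sqrtr1 ltr_sqrt; lra.
  have eta_gt0 : 0 < Num.sqrt (1 + eps) - 1 by rewrite subr_gt0.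
  have [x0 [x0_1 x0_close]] := XASQ _ normalized_image_sphere
    (card_lt_type_normalized_entries fst S Kunc AK) _ eta_gt0.
  have [y0 [y0_1 y0_close]] := YASQ _ normalized_image_sphere
    (card_lt_type_normalized_entries snd S Kunc AK) _ eta_gt0.
  rewrite subrKC in x0_close y0_close.
  exists (t x0 y0); split; first exact: unit_tensor.
  rewrite -[1 + eps]sqr_sqrtr; last lra.
  by apply: (pm_close_tensor_entries Ht S_approx) => //; rewrite unit_tensor.
- have [x0 [x0_1 x0_close]] := XSQ _ normalized_image_sphere
    (card_lt_type_normalized_entries fst S Kunc AK).
  have [y0 [y0_1 y0_close]] := YSQ _ normalized_image_sphere
    (card_lt_type_normalized_entries snd S Kunc AK).
  exists (t x0 y0); split; first exact: unit_tensor.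
  rewrite -(expr1n R 2).
  by apply: (pm_close_tensor_entries Ht S_approx) => //; rewrite unit_tensor.
Qed.
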